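(* Let $0<\epsilon\le1$ and suppose $L^*\ge\frac{1}{\epsilon^3}\log T$. Let $\sigma_{temp}$ be the random tentative schedule defined below. Then for any interval $I=[t_1,t_2]\subseteq[1,T]$, $\Pr[OF(I)\ge 6\epsilon L^*]\le 1/T^3$.
   Context: Broadcast scheduling with maximum flow time: a set $\mathcal{P}$ of unit-sized pages, requests $\rho$ with integer release time $r_\rho\ge0$ and page $p_\rho$; $L^*$ is the optimal maximum flow time; $T=\max_\rho r_\rho+n$ is the time horizon ($n=|\mathcal{P}|$); $\log$ is natural. Assume any two requests for the same page with no request for that page released strictly between them have release times differing by at most $L^*-1$. For page $p$ let $\mathcal{T}_p$ be the set of release times of requests for $p$ and $W_p=[\min\mathcal{T}_p+1,\max\mathcal{T}_p+L^*]$. Let $x^*=(x^*_{p,t})_{p\in\mathcal{P},t\in[T]}$ be a feasible solution of the linear program: $\sum_{t'=t+1}^{t+L^*}x_{p,t'}\ge1$ for all $p$ and $t\in\mathcal{T}_p$; $\sum_{p}x_{p,t}\le1$ for all $t\in[T]$; $x_{p,t}=0$ for $t\notin W_p$; $x_{p,t}\ge0$. Let $\mathcal{G}$ be a partition of $\mathcal{P}$ into at most $2L^*$ groups such that distinct pages in the same group have disjoint windows $W_p$. For each group $g$ let $y^*_{g,t}=\sum_{p\in g}\sum_{t'\le t}x^*_{p,t'}$, and choose $\alpha_g$ uniformly at random from $[0,1]$, independently over groups. The tentative schedule $\sigma_{temp}$ (which may transmit several pages at one time) does the following for each group $g$: at every time $t$ such that $y^*_{g,t-1}<k+\alpha_g\le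 y^*_{g,t}$ for some integer $k$, it transmits the (unique) page $p\in g$ with $x^*_{p,t}>0$. Let $Q_{temp}(I)$ be the number of transmissions made by $\sigma_{temp}$ during $I$, and $OF([t_1,t_2]):=\max\{Q_{temp}([t_1,t_2])-(t_2-t_1+1),0\}$. *)

From HB Require Import structures.
From mathcomp Require Import all_boot all_order all_algebra.
From mathcomp Require Import all_classical all_reals all_analysis.
Set Implicit Arguments. Unset Strict Implicit. Unset Printing Implicit Defensive.
Import Order.TTheory GRing.Theory Num.Theory.
Local Open Scope classical_set_scope.
Local Open Scope ring_scope.

(* requests are a finite list of pairs (release time r_rho, page p_rho)*)
Section Broadcast.
Variable Pg : finType.
Implicit Types (reqs : seq (nat * Pg)) (p q : Pg) (L t : nat).

Definition horizon reqs : nat := ((\max_(rho <- reqs) rho.1) + #|Pg|)%N.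

Definition max_flow_le (sigma : nat -> option Pg) reqs L : Prop :=
  forall rho, rho \in reqs ->
    exists t, (rho.1 < t <= rho.1 + L)%N /\ sigma t = Some rho.2.

Definition max_flow_feasible reqs L : Prop :=
  exists sigma : nat -> option Pg, max_flow_le sigma reqs L.

Definition is_opt_max_flow reqs L : Prop :=
  max_flow_feasible reqs L /\ forall L', max_flow_feasible reqs L' -> (L <= L')%N.

Definition consecutive_gap_le reqs L : Prop :=
  forall r1 r2 p, (r1, p) \in reqs -> (r2, p) \in reqs -> (r1 <= r2)%N ->
    (forall r, (r, p) \in reqs -> ~~ (r1 < r < r2)%N) ->
    (r2 - r1 <= L - 1)%N.

(* t \in W_p = [min T_p + 1, max T_p + L]  (empty if T_p is empty) *)
Definition in_window reqs L p t : bool :=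
  has (fun rho => (rho.2 == p) && (rho.1 < t)%N) reqs &&
  has (fun rho => (rho.2 == p) && (t <= rho.1 + L)%N) reqs.

Variable R : realType.

Definition lp_feasible reqs L (x : Pg -> nat -> R) : Prop :=
  [/\ (forall p t, (t == 0)%N || (horizon reqs < t)%N -> x p t = 0),
      (forall rho, rho \in reqs ->
         1 <= \sum_(rho.1.+1 <= t' < (rho.1 + L).+1) x rho.2 t'),
      (forall t, (1 <= t <= horizon reqs)%N -> \sum_(p : Pg) x p t <= 1),
      (forall p t, ~~ in_window reqs L p t -> x p t = 0) &
      (forall p t, 0 <= x p t)].

Definition ycum (m : nat) (grp : Pg -> 'I_m) (x : Pg -> nat -> R)
    (g : 'I_m) (t : nat) : R :=
  \sum_(p : Pg | grp p == g) \sum_(0 <= t' < t.+1) x p t'.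

Definition transmits (m : nat) (grp : Pg -> 'I_m) (x : Pg -> nat -> R)
    (a : R) (g : 'I_m) (t : nat) : bool :=
  `[< exists k : int, ycum grp x g t.-1 < k%:~R + a <= ycum grp x g t >].

Definition Qtemp (m : nat) (grp : Pg -> 'I_m) (x : Pg -> nat -> R)
    (alpha : 'I_m -> R) (t1 t2 : nat) : nat :=
  \sum_(t1 <= t < t2.+1) #|[set g : 'I_m | transmits grp x (alpha g) g t]|.

(* OF([t1,t2]) = max(Q_temp([t1,t2]) - (t2 - t1 + 1), 0)  (truncated nat subtraction) *)
Definition OF (m : nat) (grp : Pg -> 'I_m) (x : Pg -> nat -> R)
    (alpha : 'I_m -> R) (t1 t2 : nat) : nat :=
  (Qtemp grp x alpha t1 t2 - (t2 - t1 + 1))%N.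

End Broadcast.

Section Randomness.
Context {R : realType} {d : measure_display} {Omega : measurableType d}.
Variable (Pr : probability Omega R).

Definition uniform01_rv (X : Omega -> R) : Prop :=
  measurable_fun setT X /\
  forall B : set R, measurable B ->
    Pr (X @^-1` B) = (@lebesgue_measure R) (B `&` `[0%R, 1%R]).

Definition mutually_independent (I : finType) (X : I -> Omega -> R) : Prop :=
  forall (J : {set I}) (B : I -> set R), (forall i, measurable (B i)) ->
    Pr (\bigcap_(i in [set i | i \in J]) (X i @^-1` B i)) =
    (\prod_(i in J) Pr (X i @^-1` B i))%E.

End Randomness.

From HB Require Import structures.
From mathcomp Require Import all_boot all_order all_algebra.
From mathcomp Require Import all_classical all_reals all_analysis.
From mathcomp Require Import zify ring lra.
Import Order.TTheory GRing.Theory Num.Theory.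
Local Open Scope classical_set_scope.
Local Open Scope ring_scope.
Set Implicit Arguments. Unset Strict Implicit. Unset Printing Implicit Defensive.

(* Write [A_g = y_{g,t1-1}] and [B_g = y_{g,t2}]. Group [g] transmits during [[t1, t2]] once
   for every integer [k] with [A_g < k + alpha_g <= B_g], that is
   [floor (B_g - alpha_g) - floor (A_g - alpha_g)] times: [B_g - A_g - q_g] times, plus one
   exactly when [alpha_g] falls on an arc of length [q_g] of the circle R/Z. The LP capacity
   constraint gives [sum_g (B_g - A_g) <= t2 - t1 + 1], so a large [OF(I)] forces the number of
   arc hits to exceed its mean [sum_g q_g <= m <= 2 Lstar] by [6 eps Lstar]. The hits are
   independent Bernoulli variables, and a Chernoff bound with [e^lam = (1 + 2 eps / 5)^3] bounds
   this event by [exp (- 3 eps^3 Lstar) <= T^-3]. *)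

Section FloorCrossings.
Variable R : archiRealFieldType.

Lemma crossing_le_floorB (u v a : R) : u <= v ->
  (`[< exists z : int, u < z%:~R + a <= v >] : nat)%:Z
    <= Num.floor (v - a) - Num.floor (u - a).
Proof.
move=> le_uv.
have floor_le : Num.floor (u - a) <= Num.floor (v - a) by apply: le_floor; rewrite lerD2r.
case: asboolP => [[z /andP[lt_uz le_zv]]|_] /=; last by rewrite subr_ge0.
have : z <= Num.floor (v - a) by rewrite floor_ge_int lerBrDr.
have : Num.floor (u - a) < z by rewrite floor_lt_int ltrBlDr.
lia.
Qed.

Lemma crossings_le_floorB (y : nat -> R) (a : R) (k l : nat) :
  (forall t, y t <= y t.+1) -> (k <= l)%N ->
  (\sum_(k.+1 <= t < l.+1) `[< exists z : int, (y t.-1 < z%:~R + a <= y t)%R >])%:Z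
    <= Num.floor (y l - a) - Num.floor (y k - a).
Proof.
move=> y_mono; elim: l => [|l IHl] le_kl.
  by move: le_kl; rewrite leqn0 => /eqP->; rewrite big_geq // subrr.
case: (ltngtP k l.+1) le_kl => // [lt_kl|<-] _; last by rewrite big_geq // subrr.
rewrite big_nat_recr //= PoszD.
have -> : Num.floor (y l.+1 - a) - Num.floor (y k - a) =
  (Num.floor (y l - a) - Num.floor (y k - a)) +
  (Num.floor (y l.+1 - a) - Num.floor (y l - a)) by ring.
rewrite lerD // ?IHl //; exact: crossing_le_floorB.
Qed.

End FloorCrossings.

Section FracArc.
Variable R : archiRealFieldType.
Implicit Types A B a : R.

Definition frac_part (x : R) : R := x - (Num.floor x)%:~R.

(* The arc from [frac_part A] to [frac_part B] of the circle R/Z, read in [[0, 1]]: the offsets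
   [a] for which [(A - a, B - a]] contains one more integer than [B - A - frac_arc_len A B]. *)
Definition frac_arc A B : set R :=
  if frac_part A <= frac_part B then [set a | frac_part A < a <= frac_part B]
  else [set a | ~~ (frac_part B < a <= frac_part A)].

Definition frac_arc_len A B : R :=
  if frac_part A <= frac_part B then frac_part B - frac_part A
  else 1 - (frac_part A - frac_part B).

Lemma frac_part_ge0 x : 0 <= frac_part x.
Proof. by rewrite /frac_part subr_ge0 floor_le. Qed.

Lemma frac_part_lt1 x : frac_part x < 1.
Proof.
rewrite /frac_part ltrBlDr addrC.
by have := floor_lt_int x (Num.floor x + 1); rewrite ltrDl ltr01 intrD => /esym.
Qed.

Lemma frac_arc_len_ge0 A B : 0 <= frac_arc_len A B.
Proof.
have := frac_part_lt1 A; have := frac_part_lt1 B; have := frac_part_ge0 A; have := frac_part_ge0 B.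
rewrite /frac_arc_len; case: ifP; lra.
Qed.

Lemma frac_arc_len_le1 A B : frac_arc_len A B <= 1.
Proof.
have := frac_part_lt1 A; have := frac_part_lt1 B; have := frac_part_ge0 A; have := frac_part_ge0 B.
rewrite /frac_arc_len; case: ifP; lra.
Qed.

Lemma floorB_shift_le_frac_arc A B a : 0 <= a <= 1 ->
  (Num.floor (B - a) - Num.floor (A - a))%:~R
    <= B - A - frac_arc_len A B + ((a \in frac_arc A B) : nat)%:R.
Proof.
move=> /andP[a_ge0 a_le1].
pose gap : int := Num.floor B - Num.floor A - (~~ (frac_part A <= frac_part B) : nat)%:Z.
have gapE : gap%:~R = B - A - frac_arc_len A B.
  by rewrite /gap /frac_arc_len /frac_part; case: ifP => _; rewrite /= !intrD !intrN /=; ring.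
suff : Num.floor (B - a) - Num.floor (A - a) <= gap + ((a \in frac_arc A B) : nat)%:Z.
  by rewrite -(ler_int R) => /le_trans; apply; rewrite intrD gapE.
have fB : Num.floor (B - a) <= Num.floor B by apply: le_floor; rewrite lerBlDr lerDl.
have fB' : frac_part B < a -> Num.floor (B - a) < Num.floor B.
  by move=> ?; rewrite floor_lt_int ltrBlDr addrC -ltrBlDr.
have fA : Num.floor A - 1 <= Num.floor (A - a).
  by rewrite floor_ge_int intrB lerB // floor_le.
have fA' : a <= frac_part A -> Num.floor A <= Num.floor (A - a).
  by move=> ?; rewrite floor_ge_int lerBrDr addrC -lerBrDr.
rewrite /gap /frac_arc; case: ifP => le_AB;
  case: (boolP (a \in _)); rewrite ?notin_setE ?inE /= => arc_a.
- lia.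
- case: (leP a (frac_part A)) => [/fA'|lt_Aa]; first lia.
  have /fB' : frac_part B < a by rewrite ltNge; apply/negP => ?; apply: arc_a; rewrite lt_Aa.
  lia.
- case: (leP a (frac_part B)) => [le_aB|/fB']; last by case: (leP a (frac_part A)) => [/fA'|]; lia.
  have /fA' : a <= frac_part A.
    by apply: le_trans le_aB _; move/negbT: le_AB; rewrite -ltNge => /ltW.
  lia.
- move/negP: arc_a; rewrite negbK => /andP[/fB' ? /fA' ?]; lia.
Qed.

End FracArc.

Section TentativeSchedule.
Variables (R : realType) (Pg : finType) (m : nat) (grp : Pg -> 'I_m) (x : Pg -> nat -> R).
Hypothesis x_ge0 : forall p t, 0 <= x p t.
Variables (t1 t2 : nat).
Hypotheses (t1_gt0 : (0 < t1)%N) (le_t12 : (t1 <= t2)%N).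

Local Notation y g t := (ycum grp x g t).

Lemma ycum_le_succ g t : y g t <= y g t.+1.
Proof. by apply: ler_sum => p _; rewrite (big_nat_recr t.+1) //= lerDl. Qed.

Lemma Qtemp_by_group (alpha : 'I_m -> R) :
  Qtemp grp x alpha t1 t2 =
  (\sum_g \sum_(t1 <= t < t2.+1) transmits grp x (alpha g) g t)%N.
Proof.
rewrite /Qtemp exchange_big /=; apply: eq_bigr => t _.
rewrite -sum1_card big_mkcond /=; apply: eq_bigr => g _.
by rewrite /in_mem /= /in_set asboolb; case: transmits.
Qed.

Lemma transmissions_le_floorB (a : R) g :
  (\sum_(t1 <= t < t2.+1) transmits grp x a g t)%:Z
    <= Num.floor (y g t2 - a) - Num.floor (y g t1.-1 - a).
Proof.
have := crossings_le_floorB a (@ycum_le_succ g) (leq_trans (leq_pred t1) le_t12).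
by rewrite prednK.
Qed.

Hypothesis capacity : forall t, (t1 <= t <= t2)%N -> \sum_p x p t <= 1.

Lemma sum_ycum_increments_le :
  \sum_g (y g t2 - y g t1.-1) <= (t2.+1 - t1)%:R.
Proof.
have incrE g : y g t2 - y g t1.-1 = \sum_(p | grp p == g) \sum_(t1 <= t < t2.+1) x p t.
  rewrite /ycum -sumrB; apply: eq_bigr => p _.
  rewrite prednK // (big_cat_nat (n := t1)) //=; last exact: leqW.
  by rewrite addrAC subrr add0r.
under eq_bigr do rewrite incrE.
have -> : \sum_g \sum_(p | grp p == g) \sum_(t1 <= t < t2.+1) x p t =
          \sum_p \sum_(t1 <= t < t2.+1) x p t by rewrite [RHS](partition_big grp predT).
rewrite exchange_big /=.
apply: le_trans (ler_sum_nat (G := fun=> 1) _) _; last by rewrite sumr_const_nat.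
by move=> t /andP[le_t1t lt_tt2]; apply: capacity; rewrite le_t1t -ltnS.
Qed.

Lemma Qtemp_le_frac_arc_hits (alpha : 'I_m -> R) : (forall g, 0 <= alpha g <= 1) ->
  (Qtemp grp x alpha t1 t2)%:R <= (t2.+1 - t1)%:R
    - \sum_g frac_arc_len (y g t1.-1) (y g t2)
    + \sum_g ((alpha g \in frac_arc (y g t1.-1) (y g t2)) : nat)%:R.
Proof.
move=> alpha01.
have per_group g : ((\sum_(t1 <= t < t2.+1) transmits grp x (alpha g) g t)%N%:R : R)
    <= y g t2 - y g t1.-1 - frac_arc_len (y g t1.-1) (y g t2)
       + ((alpha g \in frac_arc (y g t1.-1) (y g t2)) : nat)%:R.
  apply: le_trans (floorB_shift_le_frac_arc _ _ (alpha01 g)).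
  by rewrite pmulrn ler_int; exact: transmissions_le_floorB.
rewrite Qtemp_by_group natr_sum; apply: le_trans (ler_sum _ (fun g _ => per_group g)) _.
have := sum_ycum_increments_le; rewrite !big_split !sumrN /=; lra.
Qed.

Lemma frac_arc_hits_ge_OF (alpha : 'I_m -> R) (c : R) : (forall g, 0 <= alpha g <= 1) ->
  0 < c -> c <= (OF grp x alpha t1 t2)%:R ->
  \sum_g frac_arc_len (y g t1.-1) (y g t2) + c
    <= \sum_g ((alpha g \in frac_arc (y g t1.-1) (y g t2)) : nat)%:R.
Proof.
move=> alpha01 c_gt0 c_le; have := Qtemp_le_frac_arc_hits alpha01.
have OF_gt0 : (0 < OF grp x alpha t1 t2)%N by rewrite -(ltr_nat R); exact: lt_le_trans c_le.
have -> : Qtemp grp x alpha t1 t2 = (OF grp x alpha t1 t2 + (t2.+1 - t1))%N.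
  by move: OF_gt0; rewrite /OF; lia.
by rewrite natrD; lra.
Qed.

End TentativeSchedule.

Section IndicatorAtoms.
Context {d : measure_display} {Omega : measurableType d} {I : finType}.
Variable M : I -> set Omega.

Definition indicator_atom (b : {ffun I -> bool}) : set Omega :=
  \bigcap_i (if b i then M i else ~` M i).

Lemma indicator_atomP b w : indicator_atom b w <-> [ffun i => w \in M i] = b.
Proof.
split => [atom_w|<- i _]; last first.
  by rewrite ffunE; case: ifPn; rewrite ?notin_setE; [exact: set_mem|].
apply/ffunP => i; rewrite ffunE; have := atom_w i Logic.I.
by case: (b i) => /= ?; [exact/mem_set | apply/negbTE; rewrite notin_setE].
Qed.

Lemma indicator_event_bigsetU (P : pred {ffun I -> bool}) :
  [set w | P [ffun i => w \in M i]] = \big[setU/set0]_(b | P b) indicator_atom b.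
Proof.
rewrite -bigcup_seq_cond; apply/seteqP; split => w /=.
  move=> Pw; exists [ffun i => w \in M i]; last exact/indicator_atomP.
  by rewrite /= mem_index_enum Pw.
by move=> [b /andP[_ Pb] /indicator_atomP ->].
Qed.

Hypothesis mM : forall i, measurable (M i).

Lemma measurable_indicator_atom b : measurable (indicator_atom b).
Proof.
apply: fin_bigcap_measurable; first exact: finite_finset.
by move=> i _; case: (b i); [exact: mM | apply: measurableC; exact: mM].
Qed.

Lemma measurable_indicator_event (P : pred {ffun I -> bool}) :
  measurable [set w | P [ffun i => w \in M i]].
Proof.
rewrite indicator_event_bigsetU; apply: bigsetU_measurable => b _.
exact: measurable_indicator_atom.
Qed.

End IndicatorAtoms.

Lemma measure_bigsetU_le {d} {T : measurableType d} {R : realType}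
    (mu : {measure set T -> \bar R}) (I : Type) (s : seq I) (P : pred I) (F : I -> set T) :
  (forall i, P i -> measurable (F i)) ->
  (mu (\big[setU/set0]_(i <- s | P i) F i) <= \sum_(i <- s | P i) mu (F i))%E.
Proof.
move=> mF; elim: s => [|i s IHs]; first by rewrite !big_nil measure0.
rewrite !big_cons; case: ifP => // Pi.
apply: le_trans (measureU2 _ _ _) (leeD _ IHs) => //; first exact: mF.
by apply: bigsetU_measurable.
Qed.

Section BernoulliTail.
Variables (R : realType) (I : finType) (q : I -> R).
Hypothesis q01 : forall i, 0 <= q i <= 1.

Definition bernoulli_weight (b : {ffun I -> bool}) (i : I) : R :=
  if b i then q i else 1 - q i.

Lemma bernoulli_weight_ge0 b i : 0 <= bernoulli_weight b i.
Proof. by rewrite /bernoulli_weight; case: (b i); have := q01 i; lra. Qed.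

(* Markov's inequality for [expR (lam * #true)], computed by expanding the product of the
   moment generating functions of the coordinates. *)
Lemma bernoulli_tail_le_mgf (s lam : R) : 0 <= lam ->
  \sum_(b : {ffun I -> bool} | s <= \sum_i ((b i : nat)%:R : R)) \prod_i bernoulli_weight b i
    <= expR (- (lam * s)) * \prod_i (1 - q i + expR lam * q i).
Proof.
move=> lam_ge0.
pose F (i : I) (v : bool) := expR (lam * (v : nat)%:R) * (if v then q i else 1 - q i).
have F_ge0 i v : 0 <= F i v.
  by apply: mulr_ge0; [exact: expR_ge0 | case: v; have := q01 i; lra].
have -> : \prod_i (1 - q i + expR lam * q i) = \prod_i \sum_(v : bool) F i v.
  by apply: eq_bigr => i _; rewrite big_bool /F /= mulr1 mulr0 expR0 mul1r addrC.
rewrite bigA_distr_bigA /= mulr_sumr.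
rewrite [leRHS](bigID (fun b : {ffun I -> bool} => s <= \sum_i ((b i : nat)%:R : R))) /=.
rewrite -[leLHS]addr0; apply: lerD; last first.
  by apply: sumr_ge0 => b _; apply: mulr_ge0; [exact: expR_ge0 | exact: prodr_ge0].
apply: ler_sum => b s_le.
have -> : expR (- (lam * s)) * \prod_i F i (b i) =
    expR (lam * (\sum_i ((b i : nat)%:R : R) - s)) * \prod_i bernoulli_weight b i.
  rewrite /F big_split /= mulrA -expR_sum -expRD mulrBr mulr_sumr addrC.
  by congr (expR _ * _); apply: eq_bigr.
rewrite -[leLHS]mul1r ler_wpM2r //; first by apply: prodr_ge0 => i _; exact: bernoulli_weight_ge0.
by apply: le_trans (expR_ge1Dx _); rewrite lerDl mulr_ge0 // subr_ge0.
Qed.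

Lemma bernoulli_mgf_le (z : R) : 1 <= z ->
  \prod_i (1 - q i + z * q i) <= expR ((z - 1) * \sum_i q i).
Proof.
move=> z_ge1; rewrite mulr_sumr expR_sum; apply: ler_prod => i _.
have := q01 i => q01i; apply/andP; split; first nra.
by apply: le_trans (expR_ge1Dx _); lra.
Qed.

Lemma bernoulli_tail_le (s lam : R) : 0 <= lam ->
  \sum_(b : {ffun I -> bool} | s <= \sum_i ((b i : nat)%:R : R)) \prod_i bernoulli_weight b i
    <= expR ((expR lam - 1) * \sum_i q i - lam * s).
Proof.
move=> lam_ge0; apply: le_trans (bernoulli_tail_le_mgf s lam_ge0) _.
rewrite addrC expRD; apply: ler_wpM2l; first exact: expR_ge0.
by apply: bernoulli_mgf_le; apply: le_trans (expR_ge1Dx _); rewrite lerDl.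
Qed.

End BernoulliTail.

Section OffsetSets.
Variable R : realType.

Lemma set_itv_ocE (u v : R) : [set a | u < a <= v] = [set` `]u, v]].
Proof. by apply/seteqP; split => a /=; rewrite in_itv. Qed.

Lemma measurable_frac_arc (A B : R) : measurable (frac_arc A B).
Proof.
rewrite /frac_arc; case: ifP => _; rewrite ?set_itv_ocE; first exact: measurable_itv.
have -> : [set a | ~~ (frac_part B < a <= frac_part A)] = ~` [set` `]frac_part B, frac_part A]].
  by apply/seteqP; split => a /=; rewrite in_itv /= => /negP.
by apply: measurableC; exact: measurable_itv.
Qed.

Lemma measurable_transmits (Pg : finType) (m : nat) (grp : Pg -> 'I_m) (x : Pg -> nat -> R) g t :
  measurable [set a : R | transmits grp x a g t].
Proof.
have -> : [set a : R | transmits grp x a g t] =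
    \bigcup_(k : int) [set` `]ycum grp x g t.-1 - k%:~R, ycum grp x g t - k%:~R]].
  apply/seteqP; split => a /=.
    by move=> /asboolP[k /andP[? ?]]; exists k => //=; rewrite in_itv /=; apply/andP; split; lra.
  move=> [k _]; rewrite /= in_itv /= => /andP[? ?].
  by apply/asboolP; exists k; apply/andP; split; lra.
by apply: countable_bigcupT_measurable => [|k]; [exact: countableP | exact: measurable_itv].
Qed.

End OffsetSets.

Section UniformOffsets.
Context {R : realType} {d : measure_display} {Omega : measurableType d}.
Variable Pr : probability Omega R.
Implicit Type X : Omega -> R.

Lemma uniform01_measurable_preimage X B : uniform01_rv Pr X -> measurable B ->
  measurable (X @^-1` B).
Proof. by move=> [mX _] mB; rewrite -[_ @^-1` _]setTI; exact: mX. Qed.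

Lemma uniform01_itv_oc X (u v : R) : uniform01_rv Pr X ->
  0 <= u -> u <= v -> v <= 1 -> Pr (X @^-1` [set a | u < a <= v]) = (v - u)%:E.
Proof.
move=> [_ PX] u_ge0 le_uv v_le1; rewrite set_itv_ocE PX; last exact: measurable_itv.
have -> : [set` `]u, v]] `&` `[0, 1] = [set` `]u, v]].
  apply/seteqP; split => a /=; first by case.
  rewrite /= in_itv /= => /andP[? ?]; split; first by apply/andP.
  by rewrite (@in_itv _ R) /=; apply/andP; split; lra.
rewrite lebesgue_measure_itv /= lte_fin; case: ltP => [_|]; first by rewrite -EFinD.
by move=> le_vu; rewrite (@le_anti _ _ v u) ?le_vu ?le_uv // subrr.
Qed.

Lemma uniform01_outside_null X : uniform01_rv Pr X -> Pr (X @^-1` ~` `[0, 1]) = 0%E.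
Proof.
move=> [_ PX]; rewrite PX ?setICl ?measure0 //.
by apply: measurableC; exact: measurable_itv.
Qed.

Lemma uniform01_frac_arc X (A B : R) : uniform01_rv Pr X ->
  Pr (X @^-1` frac_arc A B) = (frac_arc_len A B)%:E.
Proof.
move=> unifX; rewrite /frac_arc /frac_arc_len.
have := frac_part_ge0 A; have := frac_part_lt1 A; have := frac_part_ge0 B; have := frac_part_lt1 B.
case: ifP => le_AB *; first by rewrite uniform01_itv_oc //; lra.
have -> : [set a | ~~ (frac_part B < a <= frac_part A)] =
    ~` [set a | frac_part B < a <= frac_part A].
  by apply/seteqP; split => a /= /negP.
rewrite -preimage_setC probability_setC; last first.
  by apply: uniform01_measurable_preimage; rewrite // set_itv_ocE; exact: measurable_itv.
by rewrite uniform01_itv_oc //; lra.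
Qed.

Variables (I : finType) (alpha : I -> Omega -> R).
Hypothesis unif : forall i, uniform01_rv Pr (alpha i).

Lemma le_prob_offsets01 (E F : set Omega) : measurable E -> measurable F ->
  (forall w, (forall i, 0 <= alpha i w <= 1) -> E w -> F w) -> (Pr E <= Pr F)%E.
Proof.
move=> mE mF EF.
pose N := \big[setU/set0]_i (alpha i @^-1` ~` `[0, 1]).
have mN : measurable N.
  apply: bigsetU_measurable => i _; apply: uniform01_measurable_preimage => //.
  by apply: measurableC; exact: measurable_itv.
have PN : Pr N = 0%E.
  apply/eqP; rewrite -measure_le0; apply: le_trans; first apply: measure_bigsetU_le.
    move=> i _; apply: uniform01_measurable_preimage => //.
    by apply: measurableC; exact: measurable_itv.
  by rewrite big1 // => i _; exact: (uniform01_outside_null (unif i)).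
have EN : E `<=` N `|` F.
  move=> w Ew; have [w01|] := pselect (forall i, 0 <= alpha i w <= 1); first by right; exact: EF.
  move=> /existsNP[i out_i]; left; rewrite /N -bigcup_seq_cond.
  by exists i => //=; rewrite mem_index_enum.
apply: le_trans (le_measure _ _ _ EN) _; rewrite ?inE //; first exact: measurableU.
by apply: le_trans (measureU2 Pr mN mF) _; rewrite [X in (X + _)%E]PN add0e.
Qed.

Variable S : I -> set R.
Hypothesis mS : forall i, measurable (S i).

Let M i := alpha i @^-1` S i.

Let mM i : measurable (M i).
Proof. exact: uniform01_measurable_preimage. Qed.

Lemma offset_hits_eventE (s : R) :
  [set w | (s <= \sum_i ((alpha i w \in S i) : nat)%:R)%R] =
  \big[setU/set0]_(b : {ffun I -> bool} | s <= \sum_i ((b i : nat)%:R : R)) indicator_atom M b.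
Proof.
rewrite -(indicator_event_bigsetU M (fun b : {ffun I -> bool} => s <= \sum_i ((b i : nat)%:R : R))).
have hitsE w : \sum_i (([ffun i => w \in M i] i : nat)%:R : R) =
    \sum_i ((alpha i w \in S i) : nat)%:R by apply: eq_bigr => i _; rewrite ffunE.
by apply/seteqP; split => w; rewrite /= hitsE.
Qed.

Lemma measurable_offset_hits (s : R) :
  measurable [set w | (s <= \sum_i ((alpha i w \in S i) : nat)%:R)%R].
Proof.
rewrite offset_hits_eventE; apply: bigsetU_measurable => b _.
by apply: measurable_indicator_atom; exact: mM.
Qed.

Hypothesis indep : mutually_independent Pr alpha.
Variable q : I -> R.
Hypothesis PS : forall i, Pr (alpha i @^-1` S i) = (q i)%:E.

Lemma prob_indicator_atom b :
  Pr (indicator_atom M b) = (\prod_i bernoulli_weight q b i)%:E.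
Proof.
have -> : indicator_atom M b =
    \bigcap_(i in [set i | i \in [set: I]%SET]) (alpha i @^-1` (if b i then S i else ~` S i)).
  rewrite (_ : [set i | i \in [set: I]%SET] = setT); last first.
    by apply/seteqP; split => i //= _; rewrite in_setT.
  by apply: eq_bigcapr => i _; case: (b i).
rewrite indep; last by move=> i; case: (b i); [|apply: measurableC].
rewrite -prodEFin; apply: eq_big => [i|i _]; first by rewrite finset.in_setT.
rewrite /bernoulli_weight; case: (b i); first exact: PS.
rewrite -preimage_setC probability_setC ?PS //.
exact: uniform01_measurable_preimage.
Qed.

Lemma chernoff_offset_hits (s lam : R) : 0 <= lam ->
  (Pr [set w | (s <= \sum_i ((alpha i w \in S i) : nat)%:R)%R]
    <= (expR ((expR lam - 1) * \sum_i q i - lam * s))%:E)%E.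
Proof.
move=> lam_ge0.
have q01 i : 0 <= q i <= 1.
  rewrite -!lee_fin -PS measure_ge0 probability_le1 //.
  exact: uniform01_measurable_preimage.
rewrite offset_hits_eventE.
apply: le_trans; first apply: measure_bigsetU_le.
  by move=> b _; apply: measurable_indicator_atom; exact: mM.
rewrite (eq_bigr (fun b => (\prod_i bernoulli_weight q b i)%:E)); last first.
  by move=> b _; exact: prob_indicator_atom.
by rewrite sumEFin lee_fin; exact: bernoulli_tail_le.
Qed.

End UniformOffsets.

Lemma measurable_OF_event (R : realType) (Pg : finType) (m : nat) (grp : Pg -> 'I_m)
    (x : Pg -> nat -> R) (d : measure_display) (Omega : measurableType d)
    (Pr : probability Omega R) (alpha : 'I_m -> Omega -> R) (t1 t2 : nat) (P : pred nat) :
  (forall g, uniform01_rv Pr (alpha g)) ->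
  measurable [set w | P (OF grp x (fun g => alpha g w) t1 t2)].
Proof.
move=> unif.
(* [OF] only depends on the events "group [g] transmits at time [t]", for [t <= t2]. *)
pose M (i : 'I_m * 'I_t2.+1) := alpha i.1 @^-1` [set a | transmits grp x a i.1 i.2].
pose OF_of (f : {ffun 'I_m * 'I_t2.+1 -> bool}) :=
  (\sum_(t1 <= t < t2.+1) #|[set g | f (g, inord t)]| - (t2 - t1 + 1))%N.
have OFE w : OF grp x (fun g => alpha g w) t1 t2 = OF_of [ffun i => w \in M i].
  rewrite /OF_of /OF /Qtemp; congr (_ - _)%N.
  apply: eq_big_nat => t /andP[_ le_tt2]; apply: eq_card => g.
  by rewrite /in_mem /= /in_set /= ffunE /M /= inordK // !asboolb.
have mM i : measurable (M i).
  by apply: uniform01_measurable_preimage; [exact: unif | exact: measurable_transmits].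
have -> : [set w | P (OF grp x (fun g => alpha g w) t1 t2)] =
    [set w | (fun f => P (OF_of f)) [ffun i => w \in M i]].
  by apply/seteqP; split => w; rewrite /= OFE.
exact: (measurable_indicator_event mM (fun f => P (OF_of f))).
Qed.

Section TailExponent.
Variable R : realType.

Lemma ln_ge1Bv (w : R) : 0 < w -> 1 - w^-1 <= ln w.
Proof. by move=> w_gt0; have := expR_ge1Dx (- ln w); rewrite expRN lnK ?posrE //; lra. Qed.

Lemma offset_tail_exponent_le (eps L Q : R) :
  0 < eps <= 1 -> 0 <= Q -> Q <= 2 * L ->
  ((1 + 2 * eps / 5) ^+ 3 - 1) * Q - 3 * ln (1 + 2 * eps / 5) * (Q + 6 * eps * L)
    <= - 3 * eps ^+ 3 * L.
Proof.
move=> /andP[eps_gt0 eps_le1] Q_ge0 Q_le.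
set w := 1 + 2 * eps / 5.
have w_gt0 : 0 < w by rewrite /w; lra.
set rho := 1 - w^-1.
have rho_le : rho <= ln w by exact: ln_ge1Bv.
(* [rho * w = w - 1] turns both estimates below into polynomial identities in [w] and [eps]. *)
have rhoE : rho * w = w - 1 by rewrite /rho mulrBl mul1r mulVf ?gt_eqF.
have coef_ge0 : 0 <= w ^+ 3 - 1 - 3 * rho.
  rewrite -(pmulr_lge0 _ w_gt0).
  have -> : (w ^+ 3 - 1 - 3 * rho) * w = (w - 1) ^+ 2 * (w ^+ 2 + 2 * w + 3).
    by transitivity (w ^+ 4 - w - 3 * (rho * w)); [ring | rewrite rhoE; ring].
  by apply: mulr_ge0; [exact: sqr_ge0 | rewrite /w; nra].
have key : (w ^+ 3 - 1 - 3 * rho) * 2 - 18 * rho * eps <= - 3 * eps ^+ 3.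
  rewrite -(ler_pM2r w_gt0).
  have -> : ((w ^+ 3 - 1 - 3 * rho) * 2 - 18 * rho * eps) * w =
      eps ^+ 2 * (- (528 / 100) + (3512 / 1000) * eps + (12512 / 10000) * eps ^+ 2)
      - 3 * eps ^+ 3 * w.
    transitivity (2 * w ^+ 4 - 2 * w - (6 + 18 * eps) * (rho * w)); first ring.
    by rewrite rhoE /w; field.
  have : - (528 / 100) + (3512 / 1000) * eps + (12512 / 10000) * eps ^+ 2 <= 0 by nra.
  have := sqr_ge0 eps; nra.
have L_ge0 : 0 <= L by lra.
have ln_step : 3 * rho * (Q + 6 * eps * L) <= 3 * ln w * (Q + 6 * eps * L).
  by apply: ler_wpM2r; [nra | lra].
have Q_step := ler_wpM2l coef_ge0 Q_le.
have key_step := ler_wpM2l L_ge0 key.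
nra.
Qed.

(* The tail of [chernoff_offset_hits] with [lam = 3 * ln w], [w = 1 + 2 eps / 5]: then
   [expR lam = w ^+ 3] is a polynomial in [eps], and [ln w] only needs the bound [ln_ge1Bv]. *)
Lemma offset_tail_le (eps L Q T : R) : 0 < eps <= 1 -> 0 <= Q -> Q <= 2 * L ->
  0 < T -> ln T <= eps ^+ 3 * L ->
  expR ((expR (3 * ln (1 + 2 * eps / 5)) - 1) * Q
        - 3 * ln (1 + 2 * eps / 5) * (Q + 6 * eps * L)) <= T ^- 3.
Proof.
move=> eps01 Q_ge0 Q_le T_gt0 lnT_le.
have -> : T ^- 3 = expR (- (3 * ln T)) by rewrite expRN expRM_natl lnK.
rewrite expRM_natl lnK ?posrE; last by case/andP: eps01; lra.
by rewrite ler_expR; have := offset_tail_exponent_le eps01 Q_ge0 Q_le; lra.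
Qed.

End TailExponent.

Unset Implicit Arguments.

Theorem lemma2p13 (R : realType) (Pg : finType) (reqs : seq (nat * Pg))
  (Lstar : nat) (eps : R)
  (m : nat) (grp : Pg -> 'I_m) (x : Pg -> nat -> R)
  (d : measure_display) (Omega : measurableType d) (Pr : probability Omega R)
  (alpha : 'I_m -> Omega -> R) (t1 t2 : nat) :
  is_opt_max_flow reqs Lstar ->
  consecutive_gap_le reqs Lstar ->
  lp_feasible reqs Lstar x ->
  (m <= 2 * Lstar)%N ->
  (forall g : 'I_m, exists p, grp p = g) ->
  (forall p q, p != q -> grp p = grp q ->
     forall t, ~~ (in_window reqs Lstar p t && in_window reqs Lstar q t)) ->
  (forall g, uniform01_rv Pr (alpha g)) ->
  mutually_independent Pr alpha ->
  0 < eps <= 1 ->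
  (eps ^+ 3)^-1 * ln (horizon reqs)%:R <= Lstar%:R ->
  (1 <= t1)%N -> (t1 <= t2)%N -> (t2 <= horizon reqs)%N ->
  (Pr [set w | (6 * eps * Lstar%:R <=
               (OF grp x (fun g => alpha g w) t1 t2)%:R)%R]
     <= (((horizon reqs)%:R ^+ 3)^-1)%:E)%E.
Proof.
move=> _ _ [_ _ x_cap _ x_ge0] m_le _ _ unif indep eps01 L_ge t1_gt0 le_t12 t2_le.
set T := horizon reqs in L_ge t2_le *; set c := 6 * eps * Lstar%:R.
have mE := measurable_OF_event grp x t1 t2 (fun n => c <= n%:R) unif.
have [T_le1|T_gt1] := leqP T 1.
  by rewrite (_ : T = 1%N) ?expr1n ?invr1 ?probability_le1 //; lia.
case/andP: (eps01) => eps_gt0 _.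
have lnT_le : ln T%:R <= eps ^+ 3 * Lstar%:R by rewrite -ler_pdivrMl ?exprn_gt0.
have c_gt0 : 0 < c.
  have : 0 < ln (T%:R : R) by rewrite ln_gt0 // ltr1n.
  by have := exprn_gt0 3 eps_gt0; rewrite /c; nra.
pose arc g := frac_arc (ycum grp x g t1.-1) (ycum grp x g t2).
pose Q := \sum_g frac_arc_len (ycum grp x g t1.-1) (ycum grp x g t2).
have Q_ge0 : 0 <= Q by apply: sumr_ge0 => g _; exact: frac_arc_len_ge0.
have Q_le : Q <= 2 * Lstar%:R.
  apply: le_trans (_ : Q <= \sum_(g < m) 1) _.
    by apply: ler_sum => g _; exact: frac_arc_len_le1.
  by move: m_le; rewrite sumr_const card_ord -(ler_nat R) natrM.
have cap t : (t1 <= t <= t2)%N -> \sum_p x p t <= 1.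
  by move=> /andP[? ?]; apply: x_cap; apply/andP; split; lia.
have hits w : (forall g, 0 <= alpha g w <= 1) -> c <= (OF grp x (alpha^~ w) t1 t2)%:R ->
    Q + c <= \sum_g ((alpha g w \in arc g) : nat)%:R.
  by move=> w01; exact: (frac_arc_hits_ge_OF x_ge0 t1_gt0 le_t12 cap w01 c_gt0).
have mS g : measurable (arc g) by exact: measurable_frac_arc.
have PS g : Pr (alpha g @^-1` arc g) = (frac_arc_len (ycum grp x g t1.-1) (ycum grp x g t2))%:E.
  exact: uniform01_frac_arc.
have lam_ge0 : 0 <= 3 * ln (1 + 2 * eps / 5) by rewrite mulr_ge0 // ln_ge0 //; lra.
apply: le_trans (le_prob_offsets01 unif mE (measurable_offset_hits unif mS (Q + c)) hits) _.
apply: le_trans (chernoff_offset_hits unif mS indep PS (Q + c) lam_ge0) _.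
by rewrite lee_fin -/Q; apply: offset_tail_le => //; rewrite ltr0n; lia.
Qed.
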